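(* Let $\mathcal O\subset\mathbb R^2$ be a connected open set and let $\mathcal M=(\mathcal O,\Gamma)$ be an affine surface. Suppose there exist pairwise distinct real linear functions $L_1,L_2,L_3$ such that $\{e^{L_1},e^{L_2},e^{L_3}\}$ is a basis of $\mathcal Q(\mathcal M)$. Then $\Gamma$ has constant Christoffel symbols (i.e. is Type $\mathcal A$), and $\Gamma$ is linearly equivalent to one of: $\Gamma_r^2(a_1,a_2)$ for some $a_1,a_2$ with $a_1+a_2\neq1$ and $a_1a_2\neq0$; $\Gamma_2^1(c)$ for some $c\notin\{-1,0\}$; or $\Gamma_2^0$.
   Context: An affine manifold $(M,\nabla)$ is a smooth manifold $M$ of dimension $m\ge 2$ with a torsion-free connection $\nabla$ on $TM$; in local coordinates $\nabla_{\partial_{x^i}}\partial_{x^j}=\Gamma_{ij}^k\partial_{x^k}$ (summation over repeated indices). The curvature is $R(X,Y)Z=\nabla_X\nabla_YZ-\nabla_Y\nabla_XZ-\nabla_{[X,Y]}Z$, the Ricci tensor is $\rho(Y,Z)=\mathrm{Tr}(X\mapsto R(X,Y)Z)$, and $\rho_s(X,Y)=\frac12(\rho(X,Y)+\rho(Y,X))$. The Hessian is $\mathcal H_\nabla f=(\partial_{x^i}\partial_{x^j}f-\Gamma_{ij}^k\partial_{x^k}f)\,dx^i\otimes dx^j$. The quasi-Einstein solution space is $\mathcal Q(M,\nabla)=\{f\in C^\infty(M):\mathcal H_\nabla f+\frac{1}{m-1}f\rho_s=0\}$. For real constants, $\Gamma(a,b,c,d,e,f)$ denotes the connection on (an open subset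 of) $\mathbb R^2$ whose Christoffel symbols in the standard coordinates $(x^1,x^2)$ are the constants $\Gamma_{11}^1=a$, $\Gamma_{11}^2=b$, $\Gamma_{12}^1=\Gamma_{21}^1=c$, $\Gamma_{12}^2=\Gamma_{21}^2=d$, $\Gamma_{22}^1=e$, $\Gamma_{22}^2=f$; multiplying $\Gamma(\dots)$ by a scalar multiplies all six entries. Two connections with constant Christoffel symbols are linearly equivalent if they differ by a linear change of coordinates, i.e. there is $T\in GL(2,\mathbb R)$ with $T^*\nabla_2=\nabla_1$. A real linear function is $L(x^1,x^2)=\alpha_1x^1+\alpha_2x^2$, $\alpha_i\in\mathbb R$. The specific connections: for $a_1+a_2\ne1$, $\Gamma_r^2(a_1,a_2):=\frac{1}{a_1+a_2-1}\Gamma(a_1^2+a_2-1,\ a_1^2-a_1,\ a_1a_2,\ a_1a_2,\ a_2^2-a_2,\ a_1+a_2^2-1)$; for $c\ne-1$, $\Gamma_2^1(c):=\Gamma(-1,0,c,0,0,1+2c)$; $\Gamma_2^0:=\Gamma(-1,0,0,0,0,1)$. *)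

From Stdlib Require Import Reals.
Open Scope R_scope.

Inductive idx : Type := I1 | I2.

Definition S2 (F : idx -> R) : R := F I1 + F I2.

Definition region := R -> R -> Prop.

Definition open2 (O : region) : Prop :=
  forall x y, O x y -> exists d, 0 < d /\
    forall u v, Rabs (u - x) < d -> Rabs (v - y) < d -> O u v.

Definition connected2 (O : region) : Prop :=
  forall U V : region, open2 U -> open2 V ->
    (forall x y, O x y -> U x y \/ V x y) ->
    (forall x y, O x y -> U x y -> V x y -> False) ->
    (forall x y, O x y -> ~ U x y) \/ (forall x y, O x y -> ~ V x y).

Definition cont_on (O : region) (f : R -> R -> R) : Prop :=
  forall x y, O x y -> forall eps, 0 < eps -> exists d, 0 < d /\
    forall u v, O u v -> Rabs (u - x) < d -> Rabs (v - y) < d ->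
      Rabs (f u v - f x y) < eps.

Definition is_partial (O : region) (f : R -> R -> R) (i : idx) (g : R -> R -> R) : Prop :=
  forall x y, O x y ->
    match i with
    | I1 => derivable_pt_lim (fun t => f t y) x (g x y)
    | I2 => derivable_pt_lim (fun t => f x t) y (g x y)
    end.

(* C^infinity on O: continuous, and both partial derivatives exist on O and
   are again C^infinity. *)
CoInductive smooth (O : region) (f : R -> R -> R) : Prop :=
  smooth_intro : cont_on O f ->
    (forall i, exists g, is_partial O f i g /\ smooth O g) -> smooth O f.

(* Christoffel symbols: Gam i j k = Gamma_{ij}^k, as functions on R^2. *)
Definition connection := idx -> idx -> idx -> R -> R -> R.

(* (O, Gam) is an affine surface: smooth torsion-free connection on O. *)
Definition affine_surface (O : region) (Gam : connection) : Prop :=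
  open2 O /\
  (forall i j k, smooth O (Gam i j k)) /\
  (forall i j k x y, O x y -> Gam i j k x y = Gam j i k x y).

(* Ricci tensor in coordinates, given dG i j k l = d_{x^l} Gamma_{ij}^k:
   rho_{ij} = sum_k ( d_k G_{ij}^k - d_i G_{kj}^k
                      + sum_l (G_{ij}^l G_{kl}^k - G_{kj}^l G_{il}^k) ). *)
Definition ricci (Gam : connection) (dG : idx -> idx -> idx -> idx -> R -> R -> R)
  (i j : idx) (x y : R) : R :=
  S2 (fun k => dG i j k k x y - dG k j k i x y
     + S2 (fun l => Gam i j l x y * Gam k l k x y - Gam k j l x y * Gam i l k x y)).

Definition ricci_s Gam dG i j x y : R :=
  (ricci Gam dG i j x y + ricci Gam dG j i x y) / 2.

(* Hessian, given df a = d_a f and ddf a b = d_b d_a f: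
   H_{ij} = d_i d_j f - Gamma_{ij}^k d_k f. *)
Definition hessian (Gam : connection) (df : idx -> R -> R -> R)
  (ddf : idx -> idx -> R -> R -> R) (i j : idx) (x y : R) : R :=
  ddf j i x y - S2 (fun k => Gam i j k x y * df k x y).

(* Quasi-Einstein solution space, m = 2 so 1/(m-1) = 1.  The derivatives are
   quantified universally; for smooth f and Gam on open O they exist and are
   unique on O. *)
Definition in_Q (O : region) (Gam : connection) (f : R -> R -> R) : Prop :=
  smooth O f /\
  forall (dG : idx -> idx -> idx -> idx -> R -> R -> R)
         (df : idx -> R -> R -> R) (ddf : idx -> idx -> R -> R -> R),
    (forall i j k l, is_partial O (Gam i j k) l (dG i j k l)) ->
    (forall a, is_partial O f a (df a)) ->
    (forall a b, is_partial O (df a) b (ddf a b)) ->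
    forall i j x y, O x y ->
      hessian Gam df ddf i j x y + (1 / (2 - 1)) * f x y * ricci_s Gam dG i j x y = 0.

Definition linfun (al1 al2 : R) : R -> R -> R := fun x y => al1 * x + al2 * y.

Definition expL (al1 al2 : R) : R -> R -> R := fun x y => exp (linfun al1 al2 x y).

Definition basis3_of_Q (O : region) (Gam : connection) (f1 f2 f3 : R -> R -> R) : Prop :=
  in_Q O Gam f1 /\ in_Q O Gam f2 /\ in_Q O Gam f3 /\
  (forall c1 c2 c3 : R,
     (forall x y, O x y -> c1 * f1 x y + c2 * f2 x y + c3 * f3 x y = 0) ->
     c1 = 0 /\ c2 = 0 /\ c3 = 0) /\
  (forall f, in_Q O Gam f -> exists c1 c2 c3 : R,
     forall x y, O x y -> f x y = c1 * f1 x y + c2 * f2 x y + c3 * f3 x y).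

Definition const_conn := idx -> idx -> idx -> R.

Definition GammaC (a b c d e f : R) : const_conn :=
  fun i j k =>
    match i, j, k with
    | I1, I1, I1 => a
    | I1, I1, I2 => b
    | I1, I2, I1 | I2, I1, I1 => c
    | I1, I2, I2 | I2, I1, I2 => d
    | I2, I2, I1 => e
    | I2, I2, I2 => f
    end.

Definition scale_conn (s : R) (C : const_conn) : const_conn := fun i j k => s * C i j k.

Definition Gamma_r2 (a1 a2 : R) : const_conn :=
  scale_conn (1 / (a1 + a2 - 1))
    (GammaC (a1 ^ 2 + a2 - 1) (a1 ^ 2 - a1) (a1 * a2) (a1 * a2) (a2 ^ 2 - a2) (a1 + a2 ^ 2 - 1)).

Definition Gamma_21 (c : R) : const_conn := GammaC (-1) 0 c 0 0 (1 + 2 * c).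

Definition Gamma_20 : const_conn := GammaC (-1) 0 0 0 0 1.

(* Linear equivalence: there is T in GL(2,R) with T^* nabla2 = nabla1, i.e. the
   linear map x = T y is affine from (C1) to (C2):
   dT(nabla1_{d_i} d_j) = nabla2_{dT d_i} dT d_j, in coordinates
   sum_k T^m_k C1_{ij}^k = sum_{a,b} T^a_i T^b_j C2_{ab}^m. *)
Definition lin_equiv (C1 C2 : const_conn) : Prop :=
  exists T : idx -> idx -> R,
    T I1 I1 * T I2 I2 - T I1 I2 * T I2 I1 <> 0 /\
    forall i j m,
      S2 (fun k => T m k * C1 i j k) =
      S2 (fun a => S2 (fun b => T a i * T b j * C2 a b m)).

From Stdlib Require Import Reals Lra Nsatz Classical ClassicalEpsilon.
Open Scope R_scope.

(* At a point where the Christoffel symbols are C and the symmetrized Ricci tensor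
   is r, the function e^(a x + b y) satisfies the quasi-Einstein equation iff
   v = (a, b) solves v_i v_j - C_ij^k v_k + r_ij = 0: affine in (C, r), quadratic
   in v.  Three distinct solutions v are affinely independent, since a quadratic
   restricted to a line has at most two roots; and three affinely independent
   solutions determine (C, r).  For the classification, each model
   connection has three explicit solutions with the same position relative to the
   origin as the given ones; a linear map T carrying one triple to the other is a
   linear equivalence, because the defect of the equivalence equation is affine in
   v and vanishes at three affinely independent points. *)

Definition vec (a b : R) : idx -> R := fun i => match i with I1 => a | I2 => b end.

Definition exp_eqn (C : const_conn) (r : idx -> idx -> R) (v : idx -> R) : Prop :=
  forall i j, v i * v j - S2 (fun k => C i j k * v k) + r i j = 0.

Definition area (a1 b1 a2 b2 a3 b3 : R) : R :=
  (a2 - a1) * (b3 - b1) - (a3 - a1) * (b2 - b1).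

Lemma area_origin a1 b1 a2 b2 : area 0 0 a1 b1 a2 b2 = a1 * b2 - a2 * b1.
Proof. unfold area; ring. Qed.

Lemma Rmult_eq_0_reg_l x y : x <> 0 -> x * y = 0 -> y = 0.
Proof. intros Hx H. apply Rmult_integral in H as [H | H]; [contradiction | exact H]. Qed.

Lemma area_eq0_collinear a1 b1 a2 b2 a3 b3 :
  ~ (a1 = a2 /\ b1 = b2) -> area a1 b1 a2 b2 a3 b3 = 0 ->
  exists t, a3 = a1 + t * (a2 - a1) /\ b3 = b1 + t * (b2 - b1).
Proof.
  unfold area; intros n12 HA.
  destruct (Req_dec (a2 - a1) 0) as [Ha | Ha].
  - assert (Hb : b2 - b1 <> 0) by (intro; apply n12; split; lra).
    exists ((b3 - b1) / (b2 - b1)). split.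
    + assert (a3 - a1 = 0) by (apply (Rmult_eq_0_reg_l _ _ Hb); nsatz). rewrite Ha; lra.
    + field_simplify; [lra | exact Hb].
  - exists ((a3 - a1) / (a2 - a1)). split.
    + field_simplify; [lra | exact Ha].
    + apply (Rmult_eq_reg_l (a2 - a1)); [| exact Ha].
      field_simplify; [lra | exact Ha].
Qed.

Lemma exp_eqn_area_neq0 C r a1 b1 a2 b2 a3 b3 :
  exp_eqn C r (vec a1 b1) -> exp_eqn C r (vec a2 b2) -> exp_eqn C r (vec a3 b3) ->
  ~ (a1 = a2 /\ b1 = b2) -> ~ (a1 = a3 /\ b1 = b3) -> ~ (a2 = a3 /\ b2 = b3) ->
  area a1 b1 a2 b2 a3 b3 <> 0.
Proof.
  intros E1 E2 E3 n12 n13 n23 HA.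
  destruct (area_eq0_collinear _ _ _ _ _ _ n12 HA) as [t [-> ->]].
  assert (Ht : t * (t - 1) <> 0).
  { apply Rmult_integral_contrapositive_currified; intro Ht.
    - apply n13; split; nra.
    - apply n23; split; nra. }
  (* compare each equation at the third point with the affine combination of the
     first two: only the quadratic term t (t - 1) survives *)
  assert (Ha : (a2 - a1) * (a2 - a1) = 0).
  { apply (Rmult_eq_0_reg_l _ _ Ht).
    generalize (E1 I1 I1) (E2 I1 I1) (E3 I1 I1); cbv [S2 vec]; intros; nsatz. }
  assert (Hb : (b2 - b1) * (b2 - b1) = 0).
  { apply (Rmult_eq_0_reg_l _ _ Ht).
    generalize (E1 I2 I2) (E2 I2 I2) (E3 I2 I2); cbv [S2 vec]; intros; nsatz. }
  apply n12; split; nra.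
Qed.

Lemma affine_form_eq0 u v w a1 b1 a2 b2 a3 b3 :
  area a1 b1 a2 b2 a3 b3 <> 0 ->
  u * a1 + v * b1 + w = 0 -> u * a2 + v * b2 + w = 0 -> u * a3 + v * b3 + w = 0 ->
  u = 0 /\ v = 0 /\ w = 0.
Proof.
  intros HA E1 E2 E3.
  assert (Hu : u = 0) by (apply (Rmult_eq_0_reg_l _ _ HA); unfold area; nsatz).
  assert (Hv : v = 0) by (apply (Rmult_eq_0_reg_l _ _ HA); unfold area; nsatz).
  subst; lra.
Qed.

Lemma exp_eqn_unique C r C' r' a1 b1 a2 b2 a3 b3 :
  area a1 b1 a2 b2 a3 b3 <> 0 ->
  exp_eqn C r (vec a1 b1) -> exp_eqn C r (vec a2 b2) -> exp_eqn C r (vec a3 b3) ->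
  exp_eqn C' r' (vec a1 b1) -> exp_eqn C' r' (vec a2 b2) -> exp_eqn C' r' (vec a3 b3) ->
  forall i j k, C' i j k = C i j k.
Proof.
  intros HA E1 E2 E3 F1 F2 F3 i j k.
  generalize (E1 i j) (E2 i j) (E3 i j) (F1 i j) (F2 i j) (F3 i j); cbv [S2 vec]; intros.
  destruct (affine_form_eq0 (C' i j I1 - C i j I1) (C' i j I2 - C i j I2) (r i j - r' i j)
              _ _ _ _ _ _ HA) as [Hu [Hv _]]; try lra.
  destruct k; lra.
Qed.

Definition pull (T : idx -> idx -> R) (b : idx -> R) : idx -> R :=
  fun k => S2 (fun m => b m * T m k).

Definition lin_defect (C1 C2 : const_conn) (T : idx -> idx -> R) (i j m : idx) : R :=
  S2 (fun k => T m k * C1 i j k) - S2 (fun a => S2 (fun c => T a i * T c j * C2 a c m)).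

Lemma exp_eqn_ext {C r v w} : exp_eqn C r v -> (forall k, v k = w k) -> exp_eqn C r w.
Proof. intros E H i j. unfold S2. rewrite <- !H. apply E. Qed.

Lemma exp_eqn_pull_defect C1 r1 C2 r2 T b i j :
  exp_eqn C2 r2 b -> exp_eqn C1 r1 (pull T b) ->
  lin_defect C1 C2 T i j I1 * b I1 + lin_defect C1 C2 T i j I2 * b I2
  + (S2 (fun a => S2 (fun c => T a i * T c j * r2 a c)) - r1 i j) = 0.
Proof.
  intros E2 E1.
  generalize (E1 i j) (E2 I1 I1) (E2 I1 I2) (E2 I2 I1) (E2 I2 I2).
  cbv [lin_defect pull S2]; intros; nsatz.
Qed.

Lemma lin_equiv_of_exp_eqn C1 r1 C2 r2 T a1 b1 a2 b2 a3 b3 :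
  T I1 I1 * T I2 I2 - T I1 I2 * T I2 I1 <> 0 -> area a1 b1 a2 b2 a3 b3 <> 0 ->
  exp_eqn C2 r2 (vec a1 b1) -> exp_eqn C2 r2 (vec a2 b2) -> exp_eqn C2 r2 (vec a3 b3) ->
  exp_eqn C1 r1 (pull T (vec a1 b1)) -> exp_eqn C1 r1 (pull T (vec a2 b2)) ->
  exp_eqn C1 r1 (pull T (vec a3 b3)) ->
  lin_equiv C1 C2.
Proof.
  intros HT HA F1 F2 F3 E1 E2 E3. exists T. split; [exact HT |].
  intros i j m.
  destruct (affine_form_eq0 _ _ _ _ _ _ _ _ _ HA
              (exp_eqn_pull_defect _ _ _ _ _ _ i j F1 E1)
              (exp_eqn_pull_defect _ _ _ _ _ _ i j F2 E2)
              (exp_eqn_pull_defect _ _ _ _ _ _ i j F3 E3)) as [H1 [H2 _]].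
  unfold lin_defect in H1, H2. destruct m; lra.
Qed.

Ltac unfold_models :=
  cbv [exp_eqn S2 vec pull area GammaC Gamma_20 Gamma_21 Gamma_r2 scale_conn].

Lemma lin_equiv_Gamma_20 C r a2 b2 a3 b3 :
  exp_eqn C r (vec 0 0) -> exp_eqn C r (vec a2 b2) -> exp_eqn C r (vec a3 b3) ->
  area 0 0 a2 b2 a3 b3 <> 0 -> lin_equiv C Gamma_20.
Proof.
  intros E1 E2 E3 HA.
  set (T := fun m => match m with I1 => vec (- a2) (- b2) | I2 => vec a3 b3 end).
  apply (lin_equiv_of_exp_eqn C r Gamma_20 (fun _ _ => 0) T 0 0 (-1) 0 0 1).
  1: unfold T, area in *; unfold_models; lra.
  1: unfold_models; lra.
  1-3: unfold_models; intros [] []; ring.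
  1: apply (exp_eqn_ext E1). 2: apply (exp_eqn_ext E2). 3: apply (exp_eqn_ext E3).
  all: intros []; unfold T; unfold_models; ring.
Qed.

Lemma lin_equiv_Gamma_21 C r a1 b1 a2 b2 a3 b3 l :
  exp_eqn C r (vec a1 b1) -> exp_eqn C r (vec a2 b2) -> exp_eqn C r (vec a3 b3) ->
  a2 = l * a1 -> b2 = l * b1 -> l <> 0 -> l <> 1 -> area 0 0 a1 b1 a3 b3 <> 0 ->
  exists c, c <> -1 /\ c <> 0 /\ lin_equiv C (Gamma_21 c).
Proof.
  intros E1 E2 E3 -> -> hl0 hl1 HA.
  assert (hl : l - 1 <> 0) by lra.
  set (c := 1 / (l - 1)).
  assert (Hc : c * (l - 1) = 1) by (unfold c; field; exact hl).
  exists c. repeat split; [intro Hm; rewrite Hm in Hc; lra .. |].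
  set (T := fun m => match m with
                     | I1 => vec (a1 - a3) (b1 - b3)
                     | I2 => vec ((l - 1) * a1) ((l - 1) * b1)
                     end).
  apply (lin_equiv_of_exp_eqn C r (Gamma_21 c)
           (fun i j => match i, j with I2, I2 => c * (c + 1) | _, _ => 0 end)
           T 0 c 0 (c + 1) (-1) c).
  1: intro H; apply HA, (Rmult_eq_0_reg_l _ _ hl); revert H; unfold T; unfold_models;
       intro; nsatz.
  1: unfold_models; lra.
  1-3: unfold_models; intros [] []; ring.
  1: apply (exp_eqn_ext E1). 2: apply (exp_eqn_ext E2). 3: apply (exp_eqn_ext E3).
  all: intros []; unfold T; unfold_models; nsatz.
Qed.

Lemma lin_equiv_Gamma_r2 C r a1 b1 a2 b2 a3 b3 :
  exp_eqn C r (vec a1 b1) -> exp_eqn C r (vec a2 b2) -> exp_eqn C r (vec a3 b3) ->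
  area 0 0 a1 b1 a2 b2 <> 0 -> area 0 0 a1 b1 a3 b3 <> 0 -> area 0 0 a2 b2 a3 b3 <> 0 ->
  area a1 b1 a2 b2 a3 b3 <> 0 ->
  exists p1 p2, p1 + p2 <> 1 /\ p1 * p2 <> 0 /\ lin_equiv C (Gamma_r2 p1 p2).
Proof.
  rewrite !area_origin.
  intros E1 E2 E3 H12 H13 H23 HA.
  set (d := a1 * b2 - a2 * b1) in *.
  (* (p1, p2) are the coordinates of (a3, b3) in the basis (a1, b1), (a2, b2) *)
  set (p1 := (a3 * b2 - a2 * b3) / d). set (p2 := (a1 * b3 - a3 * b1) / d).
  assert (Hs : p1 + p2 - 1 = - area a1 b1 a2 b2 a3 b3 / d)
    by (unfold p1, p2, d, area; field; exact H12).
  assert (Hs0 : p1 + p2 - 1 <> 0).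
  { rewrite Hs. unfold Rdiv. apply Rmult_integral_contrapositive_currified.
    - apply Ropp_neq_0_compat, HA.
    - apply Rinv_neq_0_compat, H12. }
  exists p1, p2. split; [| split]; [lra | |].
  - unfold p1, p2, Rdiv. repeat apply Rmult_integral_contrapositive_currified;
      auto using Rinv_neq_0_compat.
    intro; apply H23; lra.
  - set (s := p1 + p2 - 1) in *.
    set (T := fun m => match m with I1 => vec a1 b1 | I2 => vec a2 b2 end).
    apply (lin_equiv_of_exp_eqn C r (Gamma_r2 p1 p2)
             (fun i j => match i, j with
                         | I1, I1 => (p1 ^ 2 - p1) / s
                         | I2, I2 => (p2 ^ 2 - p2) / s
                         | _, _ => p1 * p2 / s
                         end)
             T 1 0 0 1 p1 p2).
    1: intro H; apply H12; revert H; unfold T, d; unfold_models; intro; lra.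
    1: unfold_models; intro; apply Hs0; unfold s; lra.
    1-3: unfold_models; intros [] []; unfold s; field; exact Hs0.
    1: apply (exp_eqn_ext E1). 2: apply (exp_eqn_ext E2). 3: apply (exp_eqn_ext E3).
    all: intros []; unfold T, p1, p2, d; unfold_models; field; exact H12.
Qed.

Definition lin_equiv_to_model (C : const_conn) : Prop :=
  (exists p1 p2, p1 + p2 <> 1 /\ p1 * p2 <> 0 /\ lin_equiv C (Gamma_r2 p1 p2)) \/
  (exists c, c <> -1 /\ c <> 0 /\ lin_equiv C (Gamma_21 c)) \/
  lin_equiv C Gamma_20.

Lemma exp_eqn_classify_degenerate C r a1 b1 a2 b2 a3 b3 :
  exp_eqn C r (vec a1 b1) -> exp_eqn C r (vec a2 b2) -> exp_eqn C r (vec a3 b3) ->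
  ~ (a1 = a2 /\ b1 = b2) -> area a1 b1 a2 b2 a3 b3 <> 0 -> area 0 0 a1 b1 a2 b2 = 0 ->
  lin_equiv_to_model C.
Proof.
  intros E1 E2 E3 n12 HA H12. unfold lin_equiv_to_model.
  destruct (classic (a1 = 0 /\ b1 = 0)) as [[-> ->] | z1].
  { right; right. exact (lin_equiv_Gamma_20 C r a2 b2 a3 b3 E1 E2 E3 HA). }
  destruct (classic (a2 = 0 /\ b2 = 0)) as [[-> ->] | z2].
  { right; right. apply (lin_equiv_Gamma_20 C r a1 b1 a3 b3 E2 E1 E3).
    intro; apply HA; unfold area in *; lra. }
  destruct (area_eq0_collinear 0 0 a1 b1 a2 b2) as [t [Ha2 Hb2]];
    [intros [<- <-]; apply z1; split; reflexivity | exact H12 |].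
  right; left. apply (lin_equiv_Gamma_21 C r a1 b1 a2 b2 a3 b3 t E1 E2 E3); try lra.
  - intros ->. apply z2; split; lra.
  - intros ->. apply n12; split; lra.
  - intro H; apply HA. rewrite Ha2, Hb2. unfold area in *; nsatz.
Qed.

Lemma exp_eqn_classify C r a1 b1 a2 b2 a3 b3 :
  exp_eqn C r (vec a1 b1) -> exp_eqn C r (vec a2 b2) -> exp_eqn C r (vec a3 b3) ->
  ~ (a1 = a2 /\ b1 = b2) -> ~ (a1 = a3 /\ b1 = b3) -> ~ (a2 = a3 /\ b2 = b3) ->
  lin_equiv_to_model C.
Proof.
  intros E1 E2 E3 n12 n13 n23.
  pose proof (exp_eqn_area_neq0 _ _ _ _ _ _ _ _ E1 E2 E3 n12 n13 n23) as HA.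
  destruct (Req_dec (area 0 0 a1 b1 a2 b2) 0) as [H12 | H12].
  { exact (exp_eqn_classify_degenerate _ _ _ _ _ _ _ _ E1 E2 E3 n12 HA H12). }
  destruct (Req_dec (area 0 0 a1 b1 a3 b3) 0) as [H13 | H13].
  { apply (exp_eqn_classify_degenerate _ _ _ _ _ _ _ _ E1 E3 E2 n13); [| exact H13].
    intro; apply HA; unfold area in *; lra. }
  destruct (Req_dec (area 0 0 a2 b2 a3 b3) 0) as [H23 | H23].
  { apply (exp_eqn_classify_degenerate _ _ _ _ _ _ _ _ E2 E3 E1 n23); [| exact H23].
    intro; apply HA; unfold area in *; lra. }
  left. exact (lin_equiv_Gamma_r2 _ _ _ _ _ _ _ _ E1 E2 E3 H12 H13 H23 HA).
Qed.

Lemma derivable_pt_lim_exp_affine p q x :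
  derivable_pt_lim (fun t => exp (p * t + q)) x (p * exp (p * x + q)).
Proof.
  assert (Haff : derivable_pt_lim (fun t => p * t + q) x p).
  { pose proof (derivable_pt_lim_plus (fun t => p * t) (fun _ => q) x (p * 1) 0
      (derivable_pt_lim_scal id p x 1 (derivable_pt_lim_id x))
      (derivable_pt_lim_const q x)) as H.
    rewrite Rmult_1_r, Rplus_0_r in H. exact H. }
  rewrite Rmult_comm.
  exact (derivable_pt_lim_comp _ exp _ _ _ Haff (derivable_pt_lim_exp _)).
Qed.

Lemma is_partial_scal O f k g c :
  is_partial O f k g -> is_partial O (fun x y => c * f x y) k (fun x y => c * g x y).
Proof.
  intros H x y Hxy. specialize (H x y Hxy). destruct k; now apply derivable_pt_lim_scal.
Qed.

Lemma is_partial_expL O a b k :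
  is_partial O (expL a b) k (fun x y => vec a b k * expL a b x y).
Proof.
  intros x y _. unfold expL, linfun. destruct k; cbn [vec].
  - apply derivable_pt_lim_exp_affine.
  - apply (derivable_pt_lim_ext (fun t => exp (b * t + a * x))); [intro; f_equal; ring |].
    replace (a * x + b * y) with (b * y + a * x) by ring.
    apply derivable_pt_lim_exp_affine.
Qed.

Lemma in_Q_expL_exp_eqn O Gam dG a b x y :
  in_Q O Gam (expL a b) ->
  (forall i j k l, is_partial O (Gam i j k) l (dG i j k l)) ->
  O x y ->
  exp_eqn (fun i j k => Gam i j k x y) (fun i j => ricci_s Gam dG i j x y) (vec a b).
Proof.
  intros [_ HQ] HdG Hxy i j.
  pose proof (HQ dG (fun k x y => vec a b k * expL a b x y)
                 (fun k l x y => vec a b k * (vec a b l * expL a b x y)) HdG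
                 (is_partial_expL O a b)
                 (fun k l => is_partial_scal _ _ _ _ _ (is_partial_expL O a b l))
                 i j x y Hxy) as H.
  unfold hessian, S2 in *.
  assert (He : 0 < expL a b x y) by apply exp_pos.
  apply (Rmult_eq_reg_l (expL a b x y)); [| lra].
  rewrite Rmult_0_r, <- H. field.
Qed.

Lemma affine_surface_partials O Gam :
  affine_surface O Gam ->
  exists dG, forall i j k l, is_partial O (Gam i j k) l (dG i j k l).
Proof.
  intros [_ [Hsm _]].
  destruct (choice (fun (ijkl : idx * idx * idx * idx) g =>
                      let '(i, j, k, l) := ijkl in is_partial O (Gam i j k) l g))
    as [f Hf].
  - intros [[[i j] k] l]. destruct (Hsm i j k) as [_ Hd].
    destruct (Hd l) as [g [Hg _]]. now exists g.
  - exists (fun i j k l => f (i, j, k, l)). intros i j k l. exact (Hf (i, j, k, l)).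
Qed.

Lemma linfun_neq_coef a b a' b' : linfun a b <> linfun a' b' -> ~ (a = a' /\ b = b').
Proof. intros H [-> ->]. apply H; reflexivity. Qed.

Lemma basis3_of_Q_nonempty O Gam f1 f2 f3 :
  basis3_of_Q O Gam f1 f2 f3 -> exists x y, O x y.
Proof.
  intros [_ [_ [_ [Hind _]]]]. apply NNPP; intro Hne.
  destruct (Hind 1 0 0) as [H1 _]; [| lra].
  intros x y Hxy. exfalso. apply Hne. eauto.
Qed.

Theorem theorem2p5 (O : region) (Gam : connection)
  (hO : open2 O) (hconn : connected2 O) (hM : affine_surface O Gam)
  (a1 b1 a2 b2 a3 b3 : R)
  (h12 : linfun a1 b1 <> linfun a2 b2)
  (h13 : linfun a1 b1 <> linfun a3 b3)
  (h23 : linfun a2 b2 <> linfun a3 b3)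
  (hbasis : basis3_of_Q O Gam (expL a1 b1) (expL a2 b2) (expL a3 b3)) :
  exists C : const_conn,
    (forall i j k x y, O x y -> Gam i j k x y = C i j k) /\
    ((exists p1 p2 : R, p1 + p2 <> 1 /\ p1 * p2 <> 0 /\ lin_equiv C (Gamma_r2 p1 p2)) \/
     (exists c : R, c <> -1 /\ c <> 0 /\ lin_equiv C (Gamma_21 c)) \/
     lin_equiv C Gamma_20).
Proof.
  destruct (basis3_of_Q_nonempty _ _ _ _ _ hbasis) as [x0 [y0 H0]].
  destruct hbasis as [Q1 [Q2 [Q3 _]]].
  destruct (affine_surface_partials O Gam hM) as [dG HdG].
  apply linfun_neq_coef in h12, h13, h23.
  pose proof (in_Q_expL_exp_eqn _ _ _ _ _ _ _ Q1 HdG H0) as E1.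
  pose proof (in_Q_expL_exp_eqn _ _ _ _ _ _ _ Q2 HdG H0) as E2.
  pose proof (in_Q_expL_exp_eqn _ _ _ _ _ _ _ Q3 HdG H0) as E3.
  exists (fun i j k => Gam i j k x0 y0). split.
  - intros i j k x y Hxy.
    exact (exp_eqn_unique _ _ _ _ _ _ _ _ _ _
             (exp_eqn_area_neq0 _ _ _ _ _ _ _ _ E1 E2 E3 h12 h13 h23) E1 E2 E3
             (in_Q_expL_exp_eqn _ _ _ _ _ _ _ Q1 HdG Hxy)
             (in_Q_expL_exp_eqn _ _ _ _ _ _ _ Q2 HdG Hxy)
             (in_Q_expL_exp_eqn _ _ _ _ _ _ _ Q3 HdG Hxy) i j k).
  - exact (exp_eqn_classify _ _ _ _ _ _ _ _ E1 E2 E3 h12 h13 h23).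
Qed.
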